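(* Fix $\vartheta_1\in(0,\pi/2)$, $\varphi_1\in(0,\pi]$ and an integer $k\ge1$. Suppose $\eta_-<\eta_+$ are two points of $I_k$ with $\Phi(\eta_-)=\Phi(\eta_+)=\varphi_1$. Then $$\sin^2\vartheta_1\frac{\eta_-^2}{\sin^2\eta_-}<\sin^2\vartheta_1\frac{\eta_+^2}{\sin^2\eta_+}.$$
   Context: For integers $k\ge0$ let $I_k=[\vartheta_1+k\pi,(k+1)\pi-\vartheta_1]$. For $\eta\in I_k$ set $\gamma(\eta)=\sqrt{1-\sin^2\vartheta_1/\sin^2\eta}$ and $$\Phi(\eta)=-\eta\,\gamma(\eta)+k\pi+\arccos\Big(\frac{\cos(\eta-k\pi)}{\cos\vartheta_1}\Big),\qquad\arccos\in[0,\pi].$$ *)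

From Stdlib Require Import Reals.
Open Scope R_scope.

Definition in_Ik (theta1 : R) (k : nat) (eta : R) : Prop :=
  theta1 + INR k * PI <= eta <= (INR k + 1) * PI - theta1.

Definition gamma (theta1 eta : R) : R :=
  sqrt (1 - (sin theta1)^2 / (sin eta)^2).

Definition Phi (theta1 : R) (k : nat) (eta : R) : R :=
  - eta * gamma theta1 eta + INR k * PI
  + acos (cos (eta - INR k * PI) / cos theta1).

(* Write [Phi = k PI - psi] with [psi eta = eta gamma(eta) - arccos (cos (eta - k PI) / cos theta1)].
   With [t = eta - k PI], [psi' = - sin^2 theta1 (sin t - eta cos t) / (sin^3 t gamma)], and
   [sin t - eta cos t] is increasing (its derivative is [eta sin t > 0]); so [psi] rises and then
   falls on [I_k], and strictly between [eta_-] and [eta_+] it exceeds the common level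
   [c = k PI - phi1].  The function [E eta = eta^2 - (c + arccos (...))^2] equals
   [sin^2 theta1 eta^2 / sin^2 eta] on that level set, and [E' = 2 (eta - (c + arccos (...)) / gamma)]
   is positive exactly where [psi > c]; hence [E eta_- < E eta_+]. *)

From Stdlib Require Import Reals Lra.
From Coquelicot Require Import Coquelicot.
Open Scope R_scope.

Lemma acos_ge_1 x : 1 <= x -> acos x = 0.
Proof.
  intros x_ge. unfold acos.
  destruct (Rle_dec x (-1)); [lra|]. destruct (Rle_dec 1 x); lra.
Qed.

(* Near 1 from the left, [acos x < e] as soon as [cos e < x]; right of 1, [acos] is [0]. *)
Lemma continuity_pt_acos_1 : continuity_pt acos 1.
Proof.
  intros eps eps_pos. pose proof PI_RGT_0.
  set (e := Rmin eps (PI / 2)).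
  assert (e_pos : 0 < e) by (apply Rmin_pos; lra).
  assert (e_le : e <= eps /\ e <= PI / 2) by (split; [apply Rmin_l | apply Rmin_r]).
  assert (cos_e : cos e < 1) by (rewrite <- cos_0; apply cos_decreasing_1; lra).
  exists (1 - cos e); split; [lra|].
  intros x [_ x_near]. cbn in *. unfold Rdist in *. rewrite acos_1, Rminus_0_r.
  destruct (Rle_dec 1 x) as [x_ge|x_lt].
  - rewrite acos_ge_1, Rabs_R0; lra.
  - assert (x_gt : cos e < x) by (apply Rabs_def2 in x_near; lra).
    pose proof (acos_bound x). rewrite Rabs_pos_eq by lra.
    destruct (Rlt_le_dec (acos x) e) as [|e_le_acos]; [lra|].
    assert (cos (acos x) <= cos e) by (apply cos_decr_1; lra).
    pose proof (COS_bound e). rewrite cos_acos in *; lra.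
Qed.

Lemma continuity_pt_acos x : -1 <= x <= 1 -> continuity_pt acos x.
Proof.
  intros x_range.
  destruct (Req_dec x 1) as [->|x_ne_1]; [apply continuity_pt_acos_1|].
  destruct (Req_dec x (-1)) as [->|x_ne_m1].
  - apply (continuity_pt_ext (fun y => PI - acos (- y))).
    { intros y. rewrite acos_opp. ring. }
    apply continuity_pt_minus; [apply continuity_pt_const; now intros ? ?|].
    apply (continuity_pt_comp Ropp acos).
    + apply continuity_pt_opp, continuity_pt_id.
    + replace (- -1) with 1 by ring. apply continuity_pt_acos_1.
  - apply derivable_continuous_pt, derivable_pt_acos. lra.
Qed.

Lemma continuity_pt_of_ex_derive f x : ex_derive f x -> continuity_pt f x.
Proof. intros f_der. apply continuity_pt_filterlim, (ex_derive_continuous f), f_der. Qed.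

(* Only continuity is asked for at the endpoints: there [gam] below vanishes and the
   functions built from it are not differentiable. *)
Lemma lt_of_derive_pos (f df : R -> R) a b :
  a < b ->
  (forall x, a < x < b -> is_derive f x (df x)) ->
  (forall x, a <= x <= b -> continuity_pt f x) ->
  (forall x, a < x < b -> 0 < df x) ->
  f a < f b.
Proof.
  intros a_lt_b f_der f_cont df_pos.
  assert (f_der' : forall x, a < x < b -> derivable_pt_lim f x (df x))
    by (intros; apply is_derive_Reals; auto).
  destruct (MVT f id a b (fun x P => exist _ (df x) (f_der' x P))
              (fun x _ => derivable_pt_id x) a_lt_b f_cont) as (x & x_in & mvt).
  { intros; apply derivable_continuous_pt, derivable_pt_id. }
  cbn in mvt. rewrite derive_pt_id in mvt. unfold id in mvt.
  specialize (df_pos x x_in). nra.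
Qed.

Lemma gt_of_derive_neg (f df : R -> R) a b :
  a < b ->
  (forall x, a < x < b -> is_derive f x (df x)) ->
  (forall x, a <= x <= b -> continuity_pt f x) ->
  (forall x, a < x < b -> df x < 0) ->
  f b < f a.
Proof.
  intros a_lt_b f_der f_cont df_neg. apply Ropp_lt_cancel.
  apply (lt_of_derive_pos (fun x => - f x) (fun x => - df x)); auto.
  - intros x x_in. apply (is_derive_opp f). auto.
  - intros x x_in. apply continuity_pt_opp. auto.
  - intros x x_in. specialize (df_neg x x_in). lra.
Qed.

Lemma sin_sqr_sub_mult_PI k x : sin x ^ 2 = sin (x - INR k * PI) ^ 2.
Proof.
  induction k as [|k IH].
  - cbn [INR]. now rewrite Rmult_0_l, Rminus_0_r.
  - rewrite IH, S_INR.
    replace (x - INR k * PI) with ((x - (INR k + 1) * PI) + PI) by ring.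
    rewrite neg_sin. ring.
Qed.

Lemma sin_lt_sin_between th t : 0 < th < PI / 2 -> th < t < PI - th -> sin th < sin t.
Proof.
  intros th_range t_range.
  destruct (Rle_dec t (PI / 2)).
  - apply sin_increasing_1; lra.
  - rewrite <- (sin_PI_x t). apply sin_increasing_1; lra.
Qed.

Lemma sin_le_sin_between th t : 0 < th < PI / 2 -> th <= t <= PI - th -> sin th <= sin t.
Proof.
  intros th_range t_range.
  destruct (Req_dec t th) as [->|]; [lra|].
  destruct (Req_dec t (PI - th)) as [->|]; [rewrite sin_PI_x; lra|].
  left; apply sin_lt_sin_between; lra.
Qed.

Section Level_sets.

Variables th T : R.
Hypothesis th_range : 0 < th < PI / 2.
Hypothesis T_nonneg : 0 <= T.

Let sin_th_pos : 0 < sin th.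
Proof. apply sin_gt_0; lra. Qed.

Let cos_th_pos : 0 < cos th.
Proof. apply cos_gt_0; lra. Qed.

Definition gam x := sqrt (1 - sin th ^ 2 / sin (x - T) ^ 2).
Definition arc x := acos (cos (x - T) / cos th).
Definition psi x := x * gam x - arc x.
Definition tilt x := sin (x - T) - x * cos (x - T).
Definition energy c x := x ^ 2 - (c + arc x) ^ 2.

Lemma sin_th_le x : th <= x - T <= PI - th -> sin th <= sin (x - T).
Proof. intros; apply sin_le_sin_between; auto. Qed.

Lemma sin_th_lt x : th < x - T < PI - th -> sin th < sin (x - T).
Proof. intros; apply sin_lt_sin_between; auto. Qed.

Lemma gam_radicandE x : 0 < sin (x - T) ->
  1 - sin th ^ 2 / sin (x - T) ^ 2 = (sin (x - T) ^ 2 - sin th ^ 2) / sin (x - T) ^ 2.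
Proof. intros; field; lra. Qed.

Lemma gam_radicand_pos x : th < x - T < PI - th ->
  0 < 1 - sin th ^ 2 / sin (x - T) ^ 2.
Proof.
  intros x_range. pose proof (sin_th_lt x x_range).
  rewrite gam_radicandE by lra. apply Rdiv_lt_0_compat; nra.
Qed.

Lemma gam_radicand_nonneg x : th <= x - T <= PI - th ->
  0 <= 1 - sin th ^ 2 / sin (x - T) ^ 2.
Proof.
  intros x_range. pose proof (sin_th_le x x_range).
  rewrite gam_radicandE by lra. apply Rdiv_le_0_compat; nra.
Qed.

Lemma gam_sqr x : th <= x - T <= PI - th ->
  gam x * gam x = 1 - sin th ^ 2 / sin (x - T) ^ 2.
Proof. intros x_range. apply sqrt_sqrt, gam_radicand_nonneg, x_range. Qed.

Lemma gam_pos x : th < x - T < PI - th -> 0 < gam x.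
Proof.
  intros x_range. apply sqrt_lt_R0, gam_radicand_pos, x_range.
Qed.

Lemma arc_arg_sqr x :
  (cos (x - T) / cos th) ^ 2 = 1 - (sin (x - T) ^ 2 - sin th ^ 2) / cos th ^ 2.
Proof.
  pose proof (sin2_cos2 th). pose proof (sin2_cos2 (x - T)). unfold Rsqr in *.
  transitivity (cos (x - T) ^ 2 / cos th ^ 2); [field; lra|].
  replace (cos (x - T) ^ 2) with (cos th ^ 2 - (sin (x - T) ^ 2 - sin th ^ 2)) by nra.
  field; lra.
Qed.

Lemma arc_arg_range x : th <= x - T <= PI - th -> -1 <= cos (x - T) / cos th <= 1.
Proof.
  intros x_range. pose proof (sin_th_le x x_range). pose proof (arc_arg_sqr x).
  assert (0 <= (sin (x - T) ^ 2 - sin th ^ 2) / cos th ^ 2)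
    by (apply Rdiv_le_0_compat; nra).
  nra.
Qed.

Lemma arc_arg_range_strict x : th < x - T < PI - th -> -1 < cos (x - T) / cos th < 1.
Proof.
  intros x_range. pose proof (sin_th_lt x x_range). pose proof (arc_arg_sqr x).
  assert (0 < (sin (x - T) ^ 2 - sin th ^ 2) / cos th ^ 2)
    by (apply Rdiv_lt_0_compat; nra).
  nra.
Qed.


Lemma is_derive_gam x : th < x - T < PI - th ->
  is_derive gam x (sin th ^ 2 * cos (x - T) / (sin (x - T) ^ 3 * gam x)).
Proof.
  intros x_range. pose proof (sin_th_lt x x_range). pose proof (gam_pos x x_range).
  unfold gam at 1. auto_derive.
  - change (x + - T) with (x - T). split; [intro; nra|]. split; [exact (gam_radicand_pos x x_range) | exact I].
  - change (x + - T) with (x - T). change (sqrt (1 + - _)) with (gam x).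
    field. lra.
Qed.


Lemma is_derive_arc x : th < x - T < PI - th -> is_derive arc x (/ gam x).
Proof.
  intros x_range. pose proof (sin_th_lt x x_range). pose proof (gam_pos x x_range).
  set (u := cos (x - T) / cos th).
  assert (sqrt_eq : sqrt (1 - u²) = sin (x - T) / cos th * gam x).
  { assert (0 <= sin (x - T) / cos th) by (apply Rdiv_le_0_compat; lra).
    rewrite <- (sqrt_Rsqr (sin (x - T) / cos th)) by assumption.
    unfold gam. rewrite <- sqrt_mult_alt by apply Rle_0_sqr. f_equal.
    unfold u. rewrite !Rsqr_pow2, arc_arg_sqr, gam_radicandE by lra.
    field. split; lra. }
  assert (acos_der : is_derive acos u (-1 / sqrt (1 - u²))).
  { apply is_derive_Reals.
    apply (derive_pt_eq_1 _ _ _ (derivable_pt_acos u (arc_arg_range_strict x x_range))).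
    apply derive_pt_acos. }
  assert (arg_der : is_derive (fun y => cos (y - T) / cos th) x (- sin (x - T) / cos th)).
  { auto_derive; [lra|]. change (x + - T) with (x - T). field. lra. }
  unfold arc. replace (/ gam x) with (- sin (x - T) / cos th * (-1 / sqrt (1 - u²))).
  - exact (is_derive_comp acos (fun y => cos (y - T) / cos th) x _ _ acos_der arg_der).
  - rewrite sqrt_eq. field. repeat split; lra.
Qed.


Lemma is_derive_psi x : th < x - T < PI - th ->
  is_derive psi x (- (sin th ^ 2 / (sin (x - T) ^ 3 * gam x)) * tilt x).
Proof.
  intros x_range. pose proof (sin_th_lt x x_range). pose proof (gam_pos x x_range).
  unfold psi.
  replace (- _ * tilt x)
    with (1 * gam x + x * (sin th ^ 2 * cos (x - T) / (sin (x - T) ^ 3 * gam x)) - / gam x).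
  - exact (is_derive_minus _ _ x _ _
             (is_derive_mult (fun y => y) gam x _ _ (is_derive_id x) (is_derive_gam x x_range) Rmult_comm)
             (is_derive_arc x x_range)).
  - replace (1 * gam x) with (gam x * gam x / gam x) by (field; lra).
    rewrite gam_sqr by lra. unfold tilt. field. split; lra.
Qed.

Lemma is_derive_energy c x : th < x - T < PI - th ->
  is_derive (energy c) x (2 * (x - (c + arc x) / gam x)).
Proof.
  intros x_range. pose proof (gam_pos x x_range).
  unfold energy. replace (2 * (x - _)) with (INR 2 * 1 * x ^ 1 - INR 2 * (0 + / gam x) * (c + arc x) ^ 1).
  - apply (is_derive_minus (fun y => y ^ 2) (fun y => (c + arc y) ^ 2)).
    + exact (is_derive_pow (fun y => y) 2 x 1 (is_derive_id x)).
    + exact (is_derive_pow (fun y => c + arc y) 2 x _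
               (is_derive_plus (fun _ => c) arc x _ _ (is_derive_const c x) (is_derive_arc x x_range))).
  - cbn [INR]. field. lra.
Qed.

Lemma is_derive_tilt x : is_derive tilt x (x * sin (x - T)).
Proof. unfold tilt. auto_derive; [easy|]. change (x + - T) with (x - T). ring. Qed.

Lemma continuity_pt_gam x : th <= x - T <= PI - th -> continuity_pt gam x.
Proof.
  intros x_range. pose proof (sin_th_le x x_range).
  apply (continuity_pt_comp (fun y => 1 - sin th ^ 2 / sin (y - T) ^ 2) sqrt).
  - apply continuity_pt_of_ex_derive. auto_derive. change (x + - T) with (x - T). intro; nra.
  - apply continuity_pt_sqrt, gam_radicand_nonneg, x_range.
Qed.

Lemma continuity_pt_arc x : th <= x - T <= PI - th -> continuity_pt arc x.
Proof.
  intros x_range.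
  apply (continuity_pt_comp (fun y => cos (y - T) / cos th) acos).
  - apply continuity_pt_of_ex_derive. auto_derive. lra.
  - apply continuity_pt_acos, arc_arg_range, x_range.
Qed.

Lemma continuity_pt_psi x : th <= x - T <= PI - th -> continuity_pt psi x.
Proof.
  intros x_range. apply continuity_pt_minus; [apply continuity_pt_mult|].
  - apply continuity_pt_id.
  - apply continuity_pt_gam, x_range.
  - apply continuity_pt_arc, x_range.
Qed.

Lemma continuity_pt_energy c x : th <= x - T <= PI - th -> continuity_pt (energy c) x.
Proof.
  intros x_range. apply continuity_pt_minus.
  - apply continuity_pt_of_ex_derive. auto_derive. easy.
  - apply (continuity_pt_comp (fun y => c + arc y) (fun z => z ^ 2)).
    + apply continuity_pt_plus; [apply continuity_pt_const; now intros ? ?|].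
      apply continuity_pt_arc, x_range.
    + apply continuity_pt_of_ex_derive. auto_derive. easy.
Qed.


Lemma tilt_lt a b : th <= a - T -> a < b -> b - T <= PI - th -> tilt a < tilt b.
Proof.
  intros a_ge a_lt_b b_le.
  apply (lt_of_derive_pos tilt (fun x => x * sin (x - T))); [easy| | |]; intros y y_range.
  - apply is_derive_tilt.
  - apply continuity_pt_of_ex_derive. eexists. apply is_derive_tilt.
  - pose proof (sin_th_lt y ltac:(lra)). apply Rmult_lt_0_compat; lra.
Qed.

Lemma psi_slope_pos x : th < x - T < PI - th ->
  0 < sin th ^ 2 / (sin (x - T) ^ 3 * gam x).
Proof.
  intros x_range. pose proof (sin_th_lt x x_range). pose proof (gam_pos x x_range).
  apply Rdiv_lt_0_compat; [nra|]. apply Rmult_lt_0_compat; [apply pow_lt|]; lra.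
Qed.

Lemma psi_lt_of_tilt_neg a b : th <= a - T -> a < b -> b - T <= PI - th ->
  (forall y, a < y < b -> tilt y < 0) -> psi a < psi b.
Proof.
  intros a_ge a_lt_b b_le tilt_neg.
  apply (lt_of_derive_pos psi (fun y => - (sin th ^ 2 / (sin (y - T) ^ 3 * gam y)) * tilt y));
    [easy|..]; intros y y_range.
  - apply is_derive_psi. lra.
  - apply continuity_pt_psi. lra.
  - pose proof (psi_slope_pos y ltac:(lra)). specialize (tilt_neg y y_range). nra.
Qed.

Lemma psi_gt_of_tilt_pos a b : th <= a - T -> a < b -> b - T <= PI - th ->
  (forall y, a < y < b -> 0 < tilt y) -> psi b < psi a.
Proof.
  intros a_ge a_lt_b b_le tilt_pos.
  apply (gt_of_derive_neg psi (fun y => - (sin th ^ 2 / (sin (y - T) ^ 3 * gam y)) * tilt y));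
    [easy|..]; intros y y_range.
  - apply is_derive_psi. lra.
  - apply continuity_pt_psi. lra.
  - pose proof (psi_slope_pos y ltac:(lra)). specialize (tilt_pos y y_range). nra.
Qed.

Lemma psi_gt_between a b x : th <= a - T -> b - T <= PI - th -> a < x < b ->
  psi a = psi b -> psi a < psi x.
Proof.
  intros a_ge b_le x_range psi_ab.
  destruct (Rle_lt_dec (tilt x) 0) as [tilt_x|tilt_x].
  - apply psi_lt_of_tilt_neg; [lra..|]. intros y y_range.
    pose proof (tilt_lt y x ltac:(lra) ltac:(lra) ltac:(lra)). lra.
  - rewrite psi_ab. apply psi_gt_of_tilt_pos; [lra..|]. intros y y_range.
    pose proof (tilt_lt x y ltac:(lra) ltac:(lra) ltac:(lra)). lra.
Qed.

Lemma energy_on_level c x : th <= x - T <= PI - th -> psi x = c ->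
  energy c x = sin th ^ 2 * (x ^ 2 / sin (x - T) ^ 2).
Proof.
  intros x_range psi_x. pose proof (sin_th_le x x_range).
  assert (arc_x : c + arc x = x * gam x) by (unfold psi in psi_x; lra).
  unfold energy. rewrite arc_x.
  replace ((x * gam x) ^ 2) with (x ^ 2 * (gam x * gam x)) by ring.
  rewrite gam_sqr by exact x_range. field. lra.
Qed.

Lemma energy_lt_on_level a b : th <= a - T -> a < b -> b - T <= PI - th ->
  psi a = psi b -> energy (psi a) a < energy (psi a) b.
Proof.
  intros a_ge a_lt_b b_le psi_ab.
  apply (lt_of_derive_pos (energy (psi a)) (fun y => 2 * (y - (psi a + arc y) / gam y)));
    [easy|..]; intros y y_range.
  - apply is_derive_energy. lra.
  - apply continuity_pt_energy. lra.
  - pose proof (gam_pos y ltac:(lra)).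
    pose proof (psi_gt_between a b y a_ge b_le y_range psi_ab) as psi_y. unfold psi at 2 in psi_y.
    assert (quot : (psi a + arc y) / gam y * gam y = psi a + arc y) by (field; lra).
    set (q := (psi a + arc y) / gam y) in *. nra.
Qed.

End Level_sets.

Theorem lemma5p52 (theta1 phi1 : R) (k : nat) (eta_m eta_p : R) :
  0 < theta1 < PI / 2 ->
  0 < phi1 <= PI ->
  (1 <= k)%nat ->
  in_Ik theta1 k eta_m -> in_Ik theta1 k eta_p ->
  eta_m < eta_p ->
  Phi theta1 k eta_m = phi1 -> Phi theta1 k eta_p = phi1 ->
  (sin theta1)^2 * (eta_m^2 / (sin eta_m)^2)
    < (sin theta1)^2 * (eta_p^2 / (sin eta_p)^2).
Proof.
  intros th_range _ _ m_in p_in m_lt_p Phi_m Phi_p.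
  set (T := INR k * PI).
  assert (T_nonneg : 0 <= T) by (apply Rmult_le_pos; [apply pos_INR | apply Rlt_le, PI_RGT_0]).
  assert (PhiE : forall x, Phi theta1 k x = T - psi theta1 T x).
  { intros x. unfold Phi, gamma, psi, gam, arc. rewrite (sin_sqr_sub_mult_PI k x). fold T. ring. }
  unfold in_Ik in m_in, p_in. rewrite Rmult_plus_distr_r, Rmult_1_l in m_in, p_in.
  fold T in m_in, p_in.
  assert (psi_m : psi theta1 T eta_m = T - phi1) by (rewrite <- Phi_m, PhiE; ring).
  assert (psi_p : psi theta1 T eta_p = T - phi1) by (rewrite <- Phi_p, PhiE; ring).
  rewrite (sin_sqr_sub_mult_PI k eta_m), (sin_sqr_sub_mult_PI k eta_p). fold T.
  rewrite <- (energy_on_level theta1 T th_range (T - phi1) eta_m),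
          <- (energy_on_level theta1 T th_range (T - phi1) eta_p) by lra.
  rewrite <- psi_m. apply energy_lt_on_level; lra.
Qed.
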